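(* For every $T\in\mathrm{SSYT}_n$, \[ \mathsf P(\mathsf D(T))=\Phi_T(Y)\cdot\varphi_T(Y). \]
   Context: $\mathrm{SSYT}_n$: semistandard Young tableaux with entries in $[n]$, identified with their column sequences $(C_1,\dots,C_\ell)$, $C_j$ the set of entries of column $j$, $T_{ij}$ the entry in row $i$, column $j$. For cells $(i,j),(i,j+1)$ both in $T$, $\mathrm{Leg}^+_T(i,j)=C_j\cap\{T_{ij},\dots,T_{i,j+1}\}$ if $T_{i,j+1}\notin C_j$, else $\varnothing$; $\Phi_T(Y)=\prod_{\mathrm{Leg}^+_T(i,j)\neq\varnothing}(1-Y^{\#\mathrm{Leg}^+_T(i,j)})$. Dyck words: finite words in letters $\mathbf 0,\mathbf 1$ with equally many of each and no prefix containing more $\mathbf 1$s than $\mathbf 0$s. For a two-column tableau $(C_1,C_2)$ put $\bar C_1=C_1\setminus C_2$, $\bar C_2=C_2\setminus C_1$, $a=\#\bar C_1\ge b=\#\bar C_2$; $\mathsf D((C_1,C_2))$ is obtained by listing the elements of $\bar C_1\cup\bar C_2$ in increasing order, replacing each element of $\bar C_1$ by $\mathbf 0$ and each element of $\bar C_2$ by $\mathbf 1$, and appending $a-b$ further letters $\mathbf 1$. For $T=(C_1,\dots,C_\ell)$, $\mathsf D(T)$ is the concatenation $\mathsf D((C_1,C_2))\mathsf D((C_2,C_3))\cdots\mathsf D((C_{\ell-1},C_\ell))$ (empty if $\ell\le1$). Write $[\![0]\!]=1$, $[\![m]\!]=1-Y^m$ and $[\![m]\!]!=\prod_{j=1}^m[\![j]\!]$.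 A Dyck word is uniquely $w=\mathbf 0^{\ell_1}\mathbf 1^{m_1}\cdots\mathbf 0^{\ell_r}\mathbf 1^{m_r}$ with $r\ge0$, $\ell_i,m_i\ge1$; set $b_k=\sum_{i\le k}(\ell_i-m_i)$ and $t_k=m_k+b_k$, and $\mathsf P(w)=\prod_{k=1}^r\frac{[\![t_k]\!]!}{[\![b_k]\!]!}\in\mathbb Z[Y]$. The phantom factor is $\varphi_T(Y)=\prod_{s=1}^{\ell-1}[\![\#C_s-\#C_{s+1}]\!]!$. *)

From HB Require Import structures.
From mathcomp Require Import all_boot all_order all_algebra.
Set Implicit Arguments. Unset Strict Implicit. Unset Printing Implicit Defensive.
Import Order.TTheory GRing.Theory Num.Theory.
Local Open Scope ring_scope.

(* A tableau is given by its column sequence (C_1,...,C_l); each column is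
   listed top-to-bottom, i.e. as a strictly increasing sequence of entries.
   Cell (i,j) (0-indexed) holds nth 0 C_j i. *)
Definition tableau := seq (seq nat).

Definition adj_cols (C D : seq nat) : bool :=
  (size D <= size C)%N && all (fun i => nth 0 C i <= nth 0 D i)%N (iota 0 (size D)).

Definition is_SSYT (n : nat) (T : tableau) : bool :=
  all (fun C => [&& C != [::], sorted ltn C & all (fun x => 0 < x <= n)%N C]) T
  && sorted adj_cols T.

Definition col_pairs (T : tableau) : seq (seq nat * seq nat) := zip T (behead T).

Definition qint (m : nat) : {poly int} := if m == 0%N then 1 else 1 - 'X^m.
Definition qfact (m : nat) : {poly int} := \prod_(1 <= j < m.+1) qint j.

Definition leg_plus (C D : seq nat) (i : nat) : seq nat :=
  if nth 0 D i \in C then [::]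
  else [seq x <- C | (nth 0 C i <= x <= nth 0 D i)%N].

Definition PhiT (T : tableau) : {poly int} :=
  \prod_(p <- col_pairs T) \prod_(i < size p.2)
     (if leg_plus p.1 p.2 i != [::] then 1 - 'X^(size (leg_plus p.1 p.2 i)) else 1).

Definition phantom_factor (T : tableau) : {poly int} :=
  \prod_(p <- col_pairs T) qfact (size p.1 - size p.2).

(* Letters: false = 0, true = 1. *)
Definition Dpair (C1 C2 : seq nat) : seq bool :=
  let B1 := [seq x <- C1 | x \notin C2] in
  let B2 := [seq x <- C2 | x \notin C1] in
  [seq (x \in B2) | x <- sort leq (B1 ++ B2)] ++ nseq (size B1 - size B2) true.

Definition DT (T : tableau) : seq bool :=
  flatten [seq Dpair p.1 p.2 | p <- col_pairs T].

Fixpoint rle (w : seq bool) : seq (bool * nat) :=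
  match w with
  | [::] => [::]
  | x :: w' =>
      match rle w' with
      | (y, k) :: r => if x == y then (y, k.+1) :: r else (x, 1%N) :: (y, k) :: r
      | [::] => [:: (x, 1%N)]
      end
  end.

(* Given w = 0^{l_1} 1^{m_1} ... 0^{l_r} 1^{m_r}, with b_0 = 0,
   b_k = b_{k-1} + l_k - m_k and t_k = m_k + b_k (= b_{k-1} + l_k), the factor
   [[t_k]]!/[[b_k]]! is written out as the exact quotient
   \prod_(b_k < j <= t_k) [[j]]. *)
Fixpoint Paux (b : nat) (rs : seq (bool * nat)) : {poly int} :=
  match rs with
  | (false, l) :: (true, m) :: rs' =>
      let b' := (b + l - m)%N in
      let t := (m + b')%N in
      (\prod_(b'.+1 <= j < t.+1) qint j) * Paux b' rs'
  | _ => 1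
  end.

Definition Pw (w : seq bool) : {poly int} := Paux 0 (rle w).

From HB Require Import structures.
From mathcomp Require Import all_boot all_order all_algebra.
From mathcomp Require Import zify.
Import GRing.Theory.
Local Open Scope ring_scope.

(* Read a Dyck word as a lattice path, 0 going up and 1 going down.  The run
   1^(m_k) of w starts at height t_k and ends at height b_k, so P(w) telescopes
   to the product of [[h]] over all down-steps, h being the height just before
   the step.  In D((C, D)) the up-steps are the entries of C \ D and the
   down-steps those of D \ C, in increasing order.  For a down-step at
   y = D_i not in C, the height before it is #{x in C | x < y} - i, which is
   #Leg^+(i) because #{x in C | x < C_i} = i and C_i <= y; the trailing a - b
   letters 1 go down from height a - b = #C - #D to 0 and contribute the phantom
   factor [[#C - #D]]!.  Each D((C_j, C_{j+1})) returns to height 0, so the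
   weight of D(T) is the product of the weights of the column pairs. *)

Fixpoint height (h : nat) (w : seq bool) : nat :=
  match w with
  | [::] => h
  | false :: w' => height h.+1 w'
  | true :: w' => height h.-1 w'
  end.

Fixpoint ballot (h : nat) (w : seq bool) : bool :=
  match w with
  | [::] => true
  | false :: w' => ballot h.+1 w'
  | true :: w' => (0 < h)%N && ballot h.-1 w'
  end.

Fixpoint weight (h : nat) (w : seq bool) : {poly int} :=
  match w with
  | [::] => 1
  | false :: w' => weight h.+1 w'
  | true :: w' => qint h * weight h.-1 w'
  end.

Definition dyck (w : seq bool) : bool := ballot 0 w && (height 0 w == 0%N).

Lemma height_cat h w1 w2 : height h (w1 ++ w2) = height (height h w1) w2.
Proof. by elim: w1 h => [|[] w1 IH] h //=. Qed.

Lemma ballot_cat h w1 w2 :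
  ballot h (w1 ++ w2) = ballot h w1 && ballot (height h w1) w2.
Proof. by elim: w1 h => [|[] w1 IH] h //=; rewrite IH andbA. Qed.

Lemma weight_cat h w1 w2 :
  weight h (w1 ++ w2) = weight h w1 * weight (height h w1) w2.
Proof. by elim: w1 h => [|[] w1 IH] h /=; rewrite ?mul1r ?IH ?mulrA. Qed.

Lemma dyck_flatten {ws : seq (seq bool)} : all dyck ws ->
  dyck (flatten ws) /\ weight 0 (flatten ws) = \prod_(w <- ws) weight 0 w.
Proof.
elim: ws => [|w ws IH] /=; first by rewrite big_nil.
case/andP=> /andP[bw /eqP hw] /IH [/andP[b /eqP h] f].
by rewrite /dyck ballot_cat height_cat weight_cat hw bw b h f big_cons.
Qed.

Lemma ballot_false_run h l w : ballot h (nseq l false ++ w) = ballot (h + l) w.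
Proof. by elim: l h => [|l IH] h /=; rewrite ?addn0 ?IH ?addnS. Qed.

Lemma weight_false_run h l w : weight h (nseq l false ++ w) = weight (h + l) w.
Proof. by elim: l h => [|l IH] h /=; rewrite ?addn0 ?IH ?addnS. Qed.

Lemma ballot_true_run h m w :
  ballot h (nseq m true ++ w) = (m <= h)%N && ballot (h - m) w.
Proof.
elim: m h => [|m IH] h /=; first by rewrite subn0.
by rewrite IH; case: h => [|h] //=; rewrite subSS.
Qed.

Lemma weight_true_run h m w : (m <= h)%N ->
  weight h (nseq m true ++ w) =
    (\prod_((h - m).+1 <= j < h.+1) qint j) * weight (h - m) w.
Proof.
elim: m h => [|m IH] h hm /=; first by rewrite subn0 big_geq ?mul1r.
case: h hm => [|h] //= hm.
rewrite subSS IH; last by lia.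
by rewrite [in RHS]big_nat_recr /=; [rewrite mulrA [qint _ * _]mulrC | lia].
Qed.

Lemma walk_true_run k :
  [/\ ballot k (nseq k true), height k (nseq k true) = 0%N &
      weight k (nseq k true) = qfact k].
Proof.
elim: k => [|k [b h f]] /=; first by rewrite /qfact big_geq.
by split => //; rewrite f /qfact [RHS]big_nat_recr //= mulrC.
Qed.

Lemma rle_ohead (w : seq bool) : omap fst (ohead (rle w)) = ohead w.
Proof.
case: w => [|x w] //=.
by case: (rle w) => [|[y k] r] //=; case: eqP => [->|].
Qed.

Lemma rle_run (x : bool) l w : ohead w != Some x ->
  rle (nseq l.+1 x ++ w) = (x, l.+1) :: rle w.
Proof.
move=> wx; elim: l => [|l /= ->]; last by rewrite eqxx.
rewrite /=; move: wx; rewrite -rle_ohead.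
by case: (rle w) => [|[y k] r] //= yx; case: eqP => // xy; rewrite xy eqxx in yx.
Qed.

Lemma split_run (x : bool) w :
  exists l w', w = nseq l x ++ w' /\ ohead w' != Some x.
Proof.
elim: w => [|y w [l [w' [-> wx]]]]; first by exists 0%N, [::].
case: (eqVneq y x) => [->|yx]; first by exists l.+1, w'.
by exists 0%N, (y :: nseq l x ++ w'); split => //=; apply: contra_neq yx => -[].
Qed.

Lemma Paux_weight b w : ballot b w -> ohead w != Some true ->
  Paux b (rle w) = weight b w.
Proof.
elim: {w}(size w) {-2}w (leqnn (size w)) b => [|k IH] w sz b; first by case: w sz.
have [[|l] [w1 [ew w1f]]] := split_run false w; subst w.
  by case: w1 w1f {sz} => [|[] ?].
rewrite ballot_false_run weight_false_run rle_run // => bw _.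
have [[|m] [w2 [ew1 w2t]]] := split_run true w1; subst w1.
  by case: w2 w2t w1f {bw sz} => [|[] ?].
move: bw; rewrite ballot_true_run rle_run // => /andP[mb bw2].
rewrite weight_true_run // [Paux _ _]/= IH //; last first.
  by move: sz; rewrite !size_cat !size_nseq; lia.
by have -> : (m.+1 + (b + l.+1 - m.+1)).+1 = (b + l.+1).+1 by lia.
Qed.

Lemma Pw_weight w : ballot 0 w -> Pw w = weight 0 w.
Proof. by move=> bw; apply: Paux_weight; case: w bw => [|[] ?]. Qed.

(* In the word [map p s], the up-steps and the down-steps read before the
   letter coming from the entry [y]. *)
Definition ups (p : pred nat) (s : seq nat) (y : nat) : nat :=
  count (fun z => ~~ p z && (z < y)%N) s.
Definition downs (p : pred nat) (s : seq nat) (y : nat) : nat :=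
  count (fun z => p z && (z < y)%N) s.

Lemma ups_cons p x s y : (x < y)%N -> ups p (x :: s) y = (~~ p x + ups p s y)%N.
Proof. by move=> xy; rewrite /ups /= xy andbT. Qed.

Lemma downs_cons p x s y : (x < y)%N -> downs p (x :: s) y = (p x + downs p s y)%N.
Proof. by move=> xy; rewrite /downs /= xy andbT. Qed.

Lemma ups_downs_min p {x s} : all (fun z => x < z)%N s ->
  ups p (x :: s) x = 0%N /\ downs p (x :: s) x = 0%N.
Proof.
move=> /allP xs; rewrite /ups /downs /= ltnn !andbF /=.
by split; apply/eqP; rewrite -leqn0 leqNgt -has_count; apply/hasPn => z /xs /= xz;
  rewrite ltnNge ltnW ?andbF.
Qed.

Lemma walk_map_sorted {p : pred nat} {s} h : sorted ltn s ->
  (forall y, y \in s -> p y -> (downs p s y < h + ups p s y)%N) ->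
  [/\ ballot h (map p s), height h (map p s) = (h + count (predC p) s - count p s)%N &
      weight h (map p s) = \prod_(y <- s | p y) qint (h + ups p s y - downs p s y)].
Proof.
elim: s h => [|x s IH] h; first by rewrite /= big_nil addn0 subn0.
rewrite [sorted _ _]/= (path_sortedE ltn_trans) => /andP[xs ss] above.
have [ux dx] := ups_downs_min p xs.
set h' := if p x then h.-1 else h.+1.
have h_pos : p x -> (0 < h)%N.
  by move=> px; have := above x (mem_head _ _) px; rewrite ux dx addn0.
have shift y : y \in s ->
    (h + ups p (x :: s) y - downs p (x :: s) y = h' + ups p s y - downs p s y)%N /\
    (downs p (x :: s) y < h + ups p (x :: s) y)%N = (downs p s y < h' + ups p s y)%N.
  move=> /(allP xs) xy; rewrite ups_cons // downs_cons // /h'.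
  move: (ups p s y) (downs p s y) => u d {IH above ss xs ux dx}.
  by case: (p x) h_pos => /= [/(_ isT) hp|_]; split; try apply/idP/idP; lia.
have above' y : y \in s -> p y -> (downs p s y < h' + ups p s y)%N.
  by move=> ys; rewrite -(shift y ys).2; apply: above; rewrite inE ys orbT.
have [b1 h1 w1] := IH h' ss above'.
rewrite big_cons.
have -> : \prod_(y <- s | p y) qint (h + ups p (x :: s) y - downs p (x :: s) y) =
          \prod_(y <- s | p y) qint (h' + ups p s y - downs p s y).
  rewrite big_seq_cond [RHS]big_seq_cond.
  by apply: eq_bigr => y /andP[ys _]; rewrite (shift y ys).1.
rewrite [map _ _]/= ux dx addn0 subn0 [count _ _]/= [count p _]/=.
rewrite /h' in b1 h1 w1; rewrite -{}w1 {shift above above'}.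
move: (count (predC p) s) (count p s) h1 => cu cd h1.
by case: (p x) h_pos b1 h1 => /= [/(_ isT) hp|_] -> ->; split; rewrite ?hp //; lia.
Qed.

Lemma count_lt_nth {s i} : sorted ltn s -> (i < size s)%N ->
  count (fun z => z < nth 0 s i)%N s = i.
Proof.
elim: s i => [|x s IH] [|i] //=.
all: rewrite (path_sortedE ltn_trans) => /andP[/allP xs ss] hi.
  by rewrite ltnn; apply/eqP; rewrite -leqn0 leqNgt -has_count;
    apply/hasPn => z /xs; rewrite -leqNgt => /ltnW.
by rewrite xs ?IH ?mem_nth.
Qed.

Lemma count_mem_swap (C D : seq nat) (P : pred nat) : uniq C -> uniq D ->
  count (fun z => (z \in D) && P z) C = count (fun z => (z \in C) && P z) D.
Proof.
move=> uC uD.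
have filterE (A B : seq nat) :
    count (fun z => (z \in B) && P z) A = count P [seq z <- A | z \in B].
  by rewrite count_filter; apply: eq_count => z /=; rewrite andbC.
rewrite !filterE; apply/permP/uniq_perm; rewrite ?filter_uniq // => z.
by rewrite !mem_filter andbC.
Qed.

Definition col_diff (C D : seq nat) : seq nat := [seq x <- C | x \notin D].

Lemma count_col_diff (C D : seq nat) (P : pred nat) :
  count P C = (count (fun z => (z \in D) && P z) C + count P (col_diff C D))%N.
Proof.
rewrite /col_diff; elim: C => //= z C ->.
by case hz: (P z); case: (z \in D); rewrite /= ?hz; lia.
Qed.

Lemma count_col_diff_swap (C D : seq nat) (P : pred nat) : uniq C -> uniq D ->
  (count P (col_diff C D) + count P D = count P (col_diff D C) + count P C)%N.
Proof.
move=> uC uD; rewrite [count P C](count_col_diff C D) [count P D](count_col_diff D C).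
by rewrite count_mem_swap //; lia.
Qed.

Lemma mem_col_diff (A B : seq nat) z : (z \in col_diff A B) = (z \in A) && (z \notin B).
Proof. by rewrite mem_filter andbC. Qed.

Lemma col_diff_disjoint (A B : seq nat) z : z \in col_diff A B -> z \notin col_diff B A.
Proof. by rewrite !mem_col_diff => /andP[zA _]; rewrite zA andbF. Qed.

Lemma leg_factorE (l : seq nat) :
  (if l != [::] then 1 - 'X^(size l) else 1) = qint (size l).
Proof. by case: l. Qed.

Section AdjacentColumns.

Context {C D : seq nat}.
Hypotheses (sC : sorted ltn C) (CD : adj_cols C D).

Lemma adj_cols_nth i : (i < size D)%N -> (nth 0 C i <= nth 0 D i)%N /\ (i < size C)%N.
Proof.
case/andP: CD => DC /allP rows iD; split; last exact: leq_trans iD DC.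
by apply: rows; rewrite mem_iota.
Qed.

Lemma count_lt_leg_plus i : (i < size D)%N -> nth 0 D i \notin C ->
  count (fun x => x < nth 0 D i)%N C = (i + size (leg_plus C D i))%N.
Proof.
move=> iD yC; have [cy iC] := adj_cols_nth i iD.
rewrite /leg_plus (negbTE yC) size_filter.
have ci := count_lt_nth sC iC.
set y := nth 0 D i in yC cy *; set c := nth 0 C i in cy ci *; rewrite -{}ci.
rewrite -count_predUI [count (predI _ _) C](_ : _ = 0%N) ?addn0; last first.
  apply/eqP; rewrite -leqn0 leqNgt -has_count; apply/hasPn => x _.
  by apply/negP => /andP[/= xc /andP[cx _]]; lia.
apply: eq_in_count => x xC /=.
have xy : x != y by apply: contraNneq yC => <-.
by case: ltngtP xy => //= xy _; lia.
Qed.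

Lemma leg_plus_gt0 i : (i < size D)%N -> nth 0 D i \notin C ->
  (0 < size (leg_plus C D i))%N.
Proof.
move=> iD yC; have [cy iC] := adj_cols_nth i iD.
rewrite /leg_plus (negbTE yC) size_filter -has_count.
by apply/hasP; exists (nth 0 C i); rewrite ?mem_nth ?leqnn.
Qed.

Hypothesis sD : sorted ltn D.

Local Notation B1 := (col_diff C D).
Local Notation B2 := (col_diff D C).
Local Notation p := (fun x : nat => x \in col_diff D C).
Local Notation merged := (sort leq (col_diff C D ++ col_diff D C)).

Let uC : uniq C := sorted_uniq ltn_trans ltnn sC.
Let uD : uniq D := sorted_uniq ltn_trans ltnn sD.

Lemma sorted_merged : sorted ltn merged.
Proof.
rewrite ltn_sorted_uniq_leq sort_sorted ?sort_uniq; last exact: leq_total.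
rewrite cat_uniq !filter_uniq //= andbT andbT; apply/hasPn => z.
exact: col_diff_disjoint.
Qed.

Lemma ups_merged y : ups p merged y = count (fun z => z < y)%N B1.
Proof.
rewrite /ups (permP (permEl (perm_sort leq _))) count_cat.
rewrite [count _ B2](@eq_in_count _ _ pred0).
  by rewrite count_pred0 addn0; apply: eq_in_count => z /col_diff_disjoint /negbTE ->.
by move=> z /= ->.
Qed.

Lemma downs_merged y : downs p merged y = count (fun z => z < y)%N B2.
Proof.
rewrite /downs (permP (permEl (perm_sort leq _))) count_cat.
rewrite [count _ B1](@eq_in_count _ _ pred0).
  by rewrite count_pred0; apply: eq_in_count => z /= ->.
by move=> z /col_diff_disjoint /negbTE /= ->.
Qed.

Lemma leg_plus_merged i : (i < size D)%N -> nth 0 D i \notin C ->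
  let y := nth 0 D i in
  (downs p merged y < ups p merged y)%N /\
  (ups p merged y - downs p merged y)%N = size (leg_plus C D i).
Proof.
move=> iD yC y; have := count_col_diff_swap C D (fun z => z < y)%N uC uD.
rewrite -ups_merged -downs_merged (count_lt_nth sD iD) count_lt_leg_plus //.
by have := leg_plus_gt0 i iD yC; lia.
Qed.

Lemma count_merged : count p merged = size B2 /\ count (predC p) merged = size B1.
Proof.
rewrite !(permP (permEl (perm_sort leq _))) !count_cat -!count_predT.
rewrite [count p B1](@eq_in_count _ _ pred0) ?[count (predC p) B2](@eq_in_count _ _ pred0).
- by rewrite !count_pred0 addn0; split; apply: eq_in_count => z /=;
    [move=> -> | move/col_diff_disjoint/negbTE ->].
- by move=> z /= ->.
- by move=> z /col_diff_disjoint/negbTE.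
Qed.

Lemma Dpair_walk : dyck (Dpair C D) /\
  weight 0 (Dpair C D) =
    (\prod_(i < size D) qint (size (leg_plus C D i))) * qfact (size C - size D).
Proof.
have above y : y \in merged -> p y -> (downs p merged y < 0 + ups p merged y)%N.
  move=> _; rewrite mem_col_diff => /andP[yD yC].
  have iD : (index y D < size D)%N by rewrite index_mem.
  by have [] := leg_plus_merged (index y D) iD; rewrite nth_index.
have [b h w] := walk_map_sorted 0 sorted_merged above.
have [cp cnp] := count_merged.
have sizes : (size B1 - size B2 = size C - size D)%N.
  by have := count_col_diff_swap C D predT uC uD; rewrite !count_predT; lia.
have [bn hn wn] := walk_true_run (size C - size D).
rewrite /Dpair -/(col_diff C D) -/(col_diff D C) /dyck ballot_cat height_cat weight_cat.
rewrite b h w cp cnp add0n sizes bn hn wn; split => //; congr (_ * _).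
rewrite (perm_big _ (permEl (perm_sort leq _))) big_cat /= big1_seq ?mul1r; last first.
  by move=> z /andP[zB2 /col_diff_disjoint/negP].
rewrite -big_filter (all_filterP (allss _)) big_filter (big_nth 0) big_mkcond big_mkord.
apply: eq_bigr => i _; case: ifPn => [yC | /negbNE yC]; last by rewrite /leg_plus yC.
by have [_ <-] := leg_plus_merged i (ltn_ord i) yC; rewrite add0n.
Qed.

End AdjacentColumns.

Lemma col_pairs_adj {T : tableau} : all (sorted ltn) T -> sorted adj_cols T ->
  all (fun q => [&& sorted ltn q.1, adj_cols q.1 q.2 & sorted ltn q.2]) (col_pairs T).
Proof.
elim: T => [|C [|D T] IH] //= /and3P[sC sD sT] /andP[CD pT].
by rewrite sC CD sD; apply: IH; rewrite //= sD.
Qed.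

Theorem mainTheorem12 (n : nat) (T : seq (seq nat)) :
  is_SSYT n T -> Pw (DT T) = (PhiT T * phantom_factor T)%R.
Proof.
move=> /andP[cols adjT].
have sT : all (sorted ltn) T by apply/allP => C /(allP cols) /and3P[].
have pairs := col_pairs_adj sT adjT.
have dyck_pairs : all dyck [seq Dpair q.1 q.2 | q <- col_pairs T].
  rewrite all_map; apply/allP => q /(allP pairs) /and3P[sC CD sD].
  by case: (Dpair_walk sC CD sD).
have [/andP[ballotDT _] weightDT] := dyck_flatten dyck_pairs.
rewrite /DT Pw_weight // weightDT big_map /PhiT /phantom_factor -big_split.
apply: eq_big_seq => q /(allP pairs) /and3P[sC CD sD].
rewrite (Dpair_walk sC CD sD).2; congr (_ * _).
by apply: eq_bigr => i _; rewrite leg_factorE.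
Qed.
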